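(* Let $G$ be a graph of order $n$ with at least one edge. Then $\gamma^{DLD}(G)=n-1$ if and only if $G$ is a threshold graph.
   Context: All graphs are finite, simple and undirected (not necessarily connected). For $u\in V$, $N(u)$ is the set of neighbours of $u$ and $N[u]=N(u)\cup\{u\}$. A code is a non-empty subset $C\subseteq V$; $I(C;u)=N[u]\cap C$. A code $C$ is solid-locating-dominating if $I(C;u)\ne\emptyset$ for every $u\in V\setminus C$ and $I(C;u)\not\subseteq I(C;v)$ for all distinct $u,v\in V\setminus C$; $\gamma^{DLD}(G)$ is the minimum size of such a code. A threshold graph is a graph that can be built from the empty graph by repeatedly adding either an isolated vertex or a vertex adjacent to all existing vertices; equivalently, a graph in which for every two vertices $x,y$ we have $N(x)\subseteq N[y]$ or $N(y)\subseteq N[x]$. *)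

From mathcomp Require Import all_boot.
Set Implicit Arguments. Unset Strict Implicit. Unset Printing Implicit Defensive.

Definition simple_graph (T : finType) (e : rel T) : Prop :=
  symmetric e /\ irreflexive e.

Definition nbhd (T : finType) (e : rel T) (u : T) : {set T} := [set v | e u v].
Definition cnbhd (T : finType) (e : rel T) (u : T) : {set T} := u |: nbhd e u.

Definition Icode (T : finType) (e : rel T) (C : {set T}) (u : T) : {set T} :=
  cnbhd e u :&: C.

Definition is_DLD (T : finType) (e : rel T) (C : {set T}) : bool :=
  [&& C != set0,
      [forall u, (u \notin C) ==> (Icode e C u != set0)] &
      [forall u, forall v,
         [&& u \notin C, v \notin C & u != v] ==> ~~ (Icode e C u \subset Icode e C v)]].

(* gamma^{DLD}(G): minimum size of a DLD code.  The whole vertex set is a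
   DLD code whenever T is nonempty, so the default #|T| is never strictly
   below the true minimum. *)
Definition gammaDLD (T : finType) (e : rel T) : nat :=
  \big[minn/#|T|]_(C : {set T} | is_DLD e C) #|C|.

(* threshold graphs, by the iterative construction: an ordering of all
   vertices (a duplicate-free list s) such that each vertex is either
   isolated from or adjacent to all vertices occurring before it. *)
Fixpoint threshold_seq (T : finType) (e : rel T) (s : seq T) : bool :=
  match s with
  | [::] => true
  | x :: s' => threshold_seq e s' &&
               (all (fun y => ~~ e x y) s' || all (fun y => e x y) s')
  end.

Definition is_threshold (T : finType) (e : rel T) : Prop :=
  exists s : seq T, [/\ uniq s, (forall x, x \in s) & threshold_seq e s].

From mathcomp Require Import all_boot.
From mathcomp Require Import zify.
Set Implicit Arguments. Unset Strict Implicit. Unset Printing Implicit Defensive.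

(* If C is solid-locating-dominating, no two distinct vertices u, v outside C
   satisfy N(u) ⊆ N[v], since a vertex separating I(C;u) from I(C;v) lies in
   N(u) \ N[v].  In a threshold graph the neighbourhoods are nested
   (N(u) ⊆ N[v] or N(v) ⊆ N[u] for all u, v), so at most one vertex lies
   outside C, while a single edge uv makes V \ {u}
   solid-locating-dominating: hence γ^DLD = n - 1.  Conversely, if u, v
   violate nestedness, with x ∈ N(u) \ N[v] and y ∈ N(v) \ N[u], then
   V \ {u, v} is solid-locating-dominating and γ^DLD ≤ n - 2.  Finally,
   nestedness characterises threshold graphs: in a nested graph a vertex of
   minimum degree is either isolated or each of its neighbours is dominating,
   so the construction sequence can be peeled off vertex by vertex. *)

Lemma leq_bigmin_cond (I : finType) (P : pred I) (F : I -> nat) x0 j :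
  P j -> \big[minn/x0]_(i | P i) F i <= F j.
Proof.
move=> Pj; have: j \in index_enum I by rewrite mem_index_enum.
elim: (index_enum _) => [|a r IHr] //=; rewrite big_cons inE.
case/orP => [/eqP <-|jr]; first by rewrite Pj geq_minl.
by case: (P a); rewrite ?geq_min IHr ?orbT.
Qed.

Section SimpleGraph.
Variables (T : finType) (e : rel T).
Hypotheses (e_sym : symmetric e) (e_irr : irreflexive e).

Lemma in_nbhd u v : (v \in nbhd e u) = e u v.
Proof. by rewrite inE. Qed.

Lemma in_cnbhd u v : (v \in cnbhd e u) = (v == u) || e u v.
Proof. by rewrite !inE. Qed.

Lemma gammaDLD_le C : is_DLD e C -> gammaDLD e <= #|C|.
Proof. exact: leq_bigmin_cond. Qed.

Lemma gammaDLD_ge m :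
  (forall C, is_DLD e C -> m <= #|C|) -> m <= #|T| -> m <= gammaDLD e.
Proof.
move=> mC mT; apply: (big_ind (fun k => m <= k)) => // a b ma mb.
by rewrite leq_min ma mb.
Qed.

Lemma DLD_setC1 u w : e u w -> is_DLD e [set~ u].
Proof.
move=> euw; have wu : w != u by apply: contraTneq euw => ->; rewrite e_irr.
apply/and3P; split.
- by apply/set0Pn; exists w; rewrite !inE.
- apply/forallP => x; apply/implyP; rewrite !inE negbK => /eqP ->.
  by apply/set0Pn; exists w; rewrite !inE euw wu orbT.
- apply/forallP => x; apply/forallP => y; apply/implyP.
  by rewrite !inE !negbK => /and3P [/eqP -> /eqP -> /eqP].
Qed.

Lemma DLD_nbhd_not_subset C u v : is_DLD e C ->
  u \notin C -> v \notin C -> u != v -> ~~ (nbhd e u \subset cnbhd e v).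
Proof.
case/and3P => _ _ /forallP sep uC vC uv.
have := forallP (sep u) v; rewrite uC vC uv /= => /subsetPn [x].
rewrite !inE => /andP [xu xC] /nandP [xv|]; last by rewrite xC.
apply/subsetPn; exists x; last by rewrite !inE.
case/orP: xu => [/eqP xu|]; last by rewrite in_nbhd.
by rewrite -xu xC in uC.
Qed.

Definition nbhd_nested := [forall u, forall v,
  (nbhd e u \subset cnbhd e v) || (nbhd e v \subset cnbhd e u)].

Lemma nested_DLD_card C : nbhd_nested -> is_DLD e C -> #|T| - 1 <= #|C|.
Proof.
move=> /forallP nested DLD_C.
suff : #|~: C| <= 1 by rewrite cardsCs setCK; lia.
apply/card_le1_eqP => v u; rewrite !inE => vC uC.
apply/eqP; apply: contraT => uv.
have := forallP (nested u) v.
rewrite (negbTE (DLD_nbhd_not_subset DLD_C uC vC uv)).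
by rewrite eq_sym in uv; rewrite (negbTE (DLD_nbhd_not_subset DLD_C vC uC uv)).
Qed.

Lemma DLD_setC2 u v x y : e u x -> x \notin cnbhd e v ->
  e v y -> y \notin cnbhd e u -> is_DLD e (~: [set u; v]).
Proof.
rewrite !in_cnbhd !negb_or => eux /andP [xv not_evx] evy /andP [yu not_euy].
have xu : x != u by apply: contraTneq eux => ->; rewrite e_irr.
have yv : y != v by apply: contraTneq evy => ->; rewrite e_irr.
set C := ~: [set u; v].
have xC : x \in C by rewrite !inE negb_or xu xv.
have yC : y \in C by rewrite !inE negb_or yu yv.
have xIu : x \in Icode e C u by rewrite inE xC andbT in_cnbhd eux orbT.
have yIv : y \in Icode e C v by rewrite inE yC andbT in_cnbhd evy orbT.
have xIv : x \notin Icode e C v by rewrite inE xC andbT in_cnbhd negb_or xv.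
have yIu : y \notin Icode e C u by rewrite inE yC andbT in_cnbhd negb_or yu.
apply/and3P; split; first by apply/set0Pn; exists x.
  apply/forallP => z; apply/implyP; rewrite !inE negbK => /orP [] /eqP ->.
  - by apply/set0Pn; exists x.
  - by apply/set0Pn; exists y.
apply/forallP => a; apply/forallP => b; apply/implyP.
rewrite !inE !negbK => /and3P [/orP [] /eqP -> /orP [] /eqP -> ab];
  rewrite ?eqxx // in ab.
- by apply/subsetPn; exists x.
- by apply/subsetPn; exists y.
Qed.

Lemma not_nested_DLD : ~~ nbhd_nested -> exists2 C, is_DLD e C & #|C|.+2 = #|T|.
Proof.
rewrite negb_forall => /existsP [u]; rewrite negb_forall => /existsP [v].
rewrite negb_or => /andP [/subsetPn [x xu xv] /subsetPn [y yv yu]].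
rewrite !in_nbhd in xu yv.
exists (~: [set u; v]); first exact: DLD_setC2 xu xv yv yu.
have uv : u != v by apply: contraNneq xv => <-; rewrite in_cnbhd xu orbT.
by have := cardsC [set u; v]; rewrite cards2 uv.
Qed.

Lemma threshold_seq_nested s : threshold_seq e s -> {in s &, forall x y,
  {in s, forall z, e x z -> (z == y) || e y z} \/
  {in s, forall z, e y z -> (z == x) || e x z}}.
Proof.
elim: s => [|a s IHs] //= /andP [thr_s a_iso_or_dom].
have nested_a y : y \in a :: s ->
    {in a :: s, forall z, e a z -> (z == y) || e y z} \/
    {in a :: s, forall z, e y z -> (z == a) || e a z}.
  rewrite inE => /orP [/eqP ->|ys]; first by left => z _ ->; rewrite orbT.
  case/orP: a_iso_or_dom => /allP a_s; [left|right] => z;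
    rewrite inE => /orP [/eqP ->|zs].
  - by rewrite e_irr.
  - by rewrite (negbTE (a_s z zs)).
  - by rewrite eqxx.
  - by rewrite a_s ?orbT.
move=> x y; rewrite [x \in _]inE => /orP [/eqP ->|xs]; first exact: nested_a.
have xas : x \in a :: s by rewrite inE xs orbT.
rewrite [y \in _]inE => /orP [/eqP ->|ys].
  by case: (nested_a x xas) => ?; [right|left].
have eaxy : e a x = e a y.
  case/orP: a_iso_or_dom => /allP a_s.
  - by rewrite (negbTE (a_s x xs)) (negbTE (a_s y ys)).
  - by rewrite !a_s.
case: (IHs thr_s x y xs ys) => nested_xy; [left|right] => z;
  rewrite inE => /orP [/eqP ->|zs].
- by rewrite e_sym eaxy e_sym => ->; rewrite orbT.
- exact: nested_xy.
- by rewrite e_sym -eaxy e_sym => ->; rewrite orbT.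
- exact: nested_xy.
Qed.

Lemma threshold_nested : is_threshold e -> nbhd_nested.
Proof.
case=> s [_ s_all thr_s]; apply/forallP => u; apply/forallP => v.
by case: (threshold_seq_nested thr_s (s_all u) (s_all v)) => nested_uv;
  apply/orP; [left|right]; apply/subsetP => z; rewrite in_nbhd in_cnbhd;
  apply: nested_uv.
Qed.

Lemma nested_nbhdI_subset (S : {set T}) u v :
  nbhd_nested -> u \in S -> v \in S -> u != v ->
  #|nbhd e u :&: S| <= #|nbhd e v :&: S| -> nbhd e u :&: S \subset cnbhd e v.
Proof.
move=> /forallP nested uS vS uv deg_uv.
case/orP: (forallP (nested u) v) => [/(subset_trans (subsetIl _ _))//|Nv_sub].
set A := nbhd e v :&: S :\ u; set B := nbhd e u :&: S :\ v.
have AB : A \subset B.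
  apply/subsetP => z; rewrite !inE => /and3P [zu evz zS].
  have zv : z != v by apply: contraTneq evz => ->; rewrite e_irr.
  have := subsetP Nv_sub z; rewrite in_nbhd in_cnbhd (negbTE zu) /=.
  by move=> /(_ evz) euz; rewrite zv euz zS.
have card_BA : #|B| <= #|A|.
  have uNv : (u \in nbhd e v :&: S) = (v \in nbhd e u :&: S).
    by rewrite !inE uS vS e_sym.
  move: deg_uv; rewrite (cardsD1 u (nbhd e v :&: S)) (cardsD1 v (nbhd e u :&: S)).
  by rewrite -/A -/B uNv leq_add2l.
have /eqP A_eq_B : A == B by rewrite eqEcard AB card_BA.
apply/subsetP => z zNu; rewrite in_cnbhd; case: eqVneq => [//|zv] /=.
have : z \in B by rewrite !inE zv; rewrite !inE in zNu.
by rewrite -A_eq_B !inE => /and3P [].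
Qed.

Lemma nested_isolated_or_dominating (S : {set T}) x :
  nbhd_nested -> x \in S -> exists2 a, a \in S &
  {in S, forall y, ~~ e a y} \/ {in S, forall y, y != a -> e a y}.
Proof.
move=> nested xS.
case: (arg_minnP (fun i => #|nbhd e i :&: S|) xS) => y yS deg_min.
case: (set_0Vmem (nbhd e y :&: S)) => [Ny0|[w]].
  exists y => //; left => z zS; apply: contraT; rewrite negbK => eyz.
  have : z \in nbhd e y :&: S by rewrite !inE eyz.
  by rewrite Ny0 inE.
rewrite !inE => /andP [eyw wS]; exists w => //; right => v vS vw.
case: (eqVneq v y) => [->|vy]; first by rewrite e_sym.
rewrite eq_sym in vy.
have /subsetP/(_ w) := nested_nbhdI_subset nested yS vS vy (deg_min v vS).
by rewrite !inE eyw wS eq_sym (negbTE vw) e_sym; apply.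
Qed.

Lemma nested_threshold_seq (S : {set T}) : nbhd_nested ->
  exists s, [/\ uniq s, s =i S & threshold_seq e s].
Proof.
move=> nested; elim: {S}_.+1 {-2}S (ltnSn #|S|) => // n IHn S card_S.
case: (set_0Vmem S) => [->|[x xS]].
  by exists [::]; split=> // z; rewrite inE.
have [a aS iso_or_dom] := nested_isolated_or_dominating nested xS.
have [|s [uniq_s s_Sa thr_s]] := IHn (S :\ a).
  by move: card_S; rewrite (cardsD1 a S) aS.
exists (a :: s); split.
- by rewrite /= uniq_s s_Sa !inE eqxx.
- by move=> z; rewrite inE s_Sa !inE; case: eqVneq => [->|].
- rewrite /= thr_s; case: iso_or_dom => a_S; apply/orP; [left|right];
    apply/allP => z; rewrite s_Sa !inE => /andP [za zS]; exact: a_S.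
Qed.

Lemma nested_threshold : nbhd_nested -> is_threshold e.
Proof.
move=> /(nested_threshold_seq [set: T]) [s [uniq_s s_T thr_s]].
by exists s; split=> // z; rewrite s_T inE.
Qed.

End SimpleGraph.

Theorem mainTheorem7 (T : finType) (e : rel T) :
  simple_graph e ->
  (exists u v : T, e u v) ->
  gammaDLD e = #|T| - 1 <-> is_threshold e.
Proof.
move=> [e_sym e_irr] [u [w euw]].
have gamma_le_pred : gammaDLD e <= #|T| - 1.
  by rewrite subn1 -(cardsC1 u); exact/gammaDLD_le/(DLD_setC1 e_irr euw).
split=> [gammaE | thr].
- apply: (nested_threshold e_sym e_irr).
  apply: contraT => /(not_nested_DLD e_irr).
  by case=> C /gammaDLD_le; rewrite gammaE; lia.
- apply/eqP; rewrite eqn_leq gamma_le_pred; apply: gammaDLD_ge (leq_subr 1 _).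
  by move=> C; apply: nested_DLD_card (threshold_nested e_sym e_irr thr).
Qed.
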